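(* (i) Let $G_1=(V_1,E_1)$ and $G_2=(V_2,E_2)$ be geometric graphs in the same finite-dimensional real vector space $X$, and suppose $V_{12}=V_1\cap V_2$ contains at least two distinct vertices. Let $E_{12}$ be the set of edges of $G_1$ both of whose endpoints lie in $V_{12}$. Let $G=(V,E)$ be a geometric graph in $X$ with $V=V_1\cup V_2$ and $E\supseteq (E_1\setminus E_{12})\cup E_2$. If $G_1$ and $G_2$ are both indecomposable, then $G$ is indecomposable. (ii) Let $G_1=(V_1,E_1)$ and $G_2=(V_2,E_2)$ be indecomposable geometric graphs in the same space $X$, and suppose $V_1\cap V_2$ contains two distinct vertices $u$ and $w$. Let $G=(V,E)$ be the geometric graph with $V=V_1\cup V_2$ and $E=(E_1\setminus\{[u,w]\})\cup E_2$. Then $G$ is indecomposable.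
   Context: A geometric graph is a graph $G=(V,E)$ whose vertex set $V$ is a subset of a finite-dimensional real vector space $X$ and whose edges are line segments $[v,w]$ joining members of $V$. A function $f\colon V\to X$ is a decomposing function for $G$ if, for every edge $[v,w]\in E$, $f(v)-f(w)$ is a scalar multiple (any real scalar, possibly zero or negative) of $v-w$. The graph $G$ is indecomposable if every decomposing function is the restriction to $V$ of a map $x\mapsto \alpha x+z$ for some scalar $\alpha$ and vector $z\in X$ (this includes constant maps); otherwise $G$ is decomposable. In (ii), nothing is assumed about whether $[u,w]$ is an edge of $G_1$ or of $G_2$. *)

From HB Require Import structures.
From mathcomp Require Import all_boot all_order all_algebra.
From mathcomp Require Import reals.
Set Implicit Arguments. Unset Strict Implicit. Unset Printing Implicit Defensive.
Import Order.TTheory GRing.Theory Num.Theory.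
Local Open Scope ring_scope.

(* Since [v,w] = [w,v], the edge relation is required to be symmetric,
   so that E represents a set of unordered pairs (segments). *)
Definition geometric_graph (R : realType) (n : nat)
  (V : 'rV[R]_n -> Prop) (E : 'rV[R]_n -> 'rV[R]_n -> Prop) : Prop :=
  (forall v w, E v w -> V v /\ V w) /\ (forall v w, E v w -> E w v).

(* f : V -> X is decomposing for G = (V,E) if for every edge [v,w],
   f v - f w is a real multiple of v - w.  (f is given as a total map on X;
   only its values on V matter.) *)
Definition decomposing (R : realType) (n : nat)
  (V : 'rV[R]_n -> Prop) (E : 'rV[R]_n -> 'rV[R]_n -> Prop)
  (f : 'rV[R]_n -> 'rV[R]_n) : Prop :=
  forall v w, E v w -> exists c : R, f v - f w = c *: (v - w).

Definition indecomposable (R : realType) (n : nat)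
  (V : 'rV[R]_n -> Prop) (E : 'rV[R]_n -> 'rV[R]_n -> Prop) : Prop :=
  forall f, decomposing V E f ->
    exists (alpha : R) (z : 'rV[R]_n), forall v, V v -> f v = alpha *: v + z.

(* Restricting a decomposing function of G to G2 gives a decomposing function
   of G2, so it is affine on V2.  On G1 it is decomposing as well: every edge
   of G1 that G may lack has both endpoints in V2, where the map is already
   affine.  So it is affine on V1 too, and two affine maps x |-> a x + z that
   agree at two distinct points coincide, which glues them on V1 u V2. *)
From mathcomp Require Import all_boot all_order all_algebra.
From mathcomp Require Import reals.
From Stdlib Require Import Classical.
Import GRing.Theory.
Local Open Scope ring_scope.

Lemma affine_eq_of_agree2 {K : fieldType} {U : lmodType K} {a1 a2 : K}
    {z1 z2 u w : U} :
  u != w -> a1 *: u + z1 = a2 *: u + z2 -> a1 *: w + z1 = a2 *: w + z2 ->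
  a1 = a2 /\ z1 = z2.
Proof.
move=> uw eq_u eq_w.
have diff_eq : (a1 - a2) *: (u - w) = 0.
  have -> : (a1 - a2) *: (u - w) =
      (a1 *: u + z1 - (a1 *: w + z1)) - (a2 *: u + z2 - (a2 *: w + z2)).
    by rewrite [a1 *: w + _]addrC [a2 *: w + _]addrC !addrKA scalerBl !scalerBr.
  by rewrite eq_u eq_w subrr.
have /eqP a12 : a1 == a2.
  by move/eqP: diff_eq; rewrite scaler_eq0 !subr_eq0 (negbTE uw) orbF.
subst a2.
by split=> //; apply: (addrI (a1 *: u)).
Qed.

Section Gluing.
Context {R : realType} {n : nat}.
Implicit Types (V W : 'rV[R]_n -> Prop) (E : 'rV[R]_n -> 'rV[R]_n -> Prop).
Implicit Types (f : 'rV[R]_n -> 'rV[R]_n).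

Definition affine_on V f :=
  exists (alpha : R) (z : 'rV[R]_n), forall v, V v -> f v = alpha *: v + z.

Lemma affine_on_union {V1 V2 f} {u w : 'rV[R]_n} :
  u <> w -> V1 u -> V2 u -> V1 w -> V2 w ->
  affine_on V1 f -> affine_on V2 f -> affine_on (fun x => V1 x \/ V2 x) f.
Proof.
move=> /eqP uw V1u V2u V1w V2w [a1 [z1 f1]] [a2 [z2 f2]].
have [a12 z12] : a1 = a2 /\ z1 = z2.
  by apply: (affine_eq_of_agree2 uw); rewrite -f1 // -f2.
by subst a2 z2; exists a1, z1 => v [/f1|/f2].
Qed.

Lemma decomposing_sub {V W E E' f} :
  (forall a b, E' a b -> E a b) -> decomposing V E f -> decomposing W E' f.
Proof. by move=> sub_E dec_f a b /sub_E /dec_f. Qed.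

Lemma affine_on_decomposing_edge {W f} {a b : 'rV[R]_n} :
  affine_on W f -> W a -> W b -> exists c : R, f a - f b = c *: (a - b).
Proof.
move=> [alpha [z fW]] Wa Wb.
by exists alpha; rewrite fW // fW // [alpha *: b + z]addrC addrKA scalerBr.
Qed.

Lemma indecomposable_glue {V1 E1 V2 E2 E} {u w : 'rV[R]_n} :
  indecomposable V1 E1 -> indecomposable V2 E2 ->
  u <> w -> V1 u -> V2 u -> V1 w -> V2 w ->
  (forall a b, E2 a b -> E a b) ->
  (forall a b, E1 a b -> E a b \/ V2 a /\ V2 b) ->
  indecomposable (fun x => V1 x \/ V2 x) E.
Proof.
move=> ind1 ind2 uw V1u V2u V1w V2w sub_E2 sub_E1 f dec_f.
have aff2 : affine_on V2 f by apply: ind2; apply: decomposing_sub sub_E2 dec_f.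
have aff1 : affine_on V1 f.
  apply: ind1 => a b /sub_E1 [/dec_f //|[V2a V2b]].
  exact: affine_on_decomposing_edge aff2 V2a V2b.
exact: affine_on_union uw V1u V2u V1w V2w aff1 aff2.
Qed.

End Gluing.

Theorem theorem2 :
  (* (i) *)
  (forall (R : realType) (n : nat)
     (V1 : 'rV[R]_n -> Prop) (E1 : 'rV[R]_n -> 'rV[R]_n -> Prop)
     (V2 : 'rV[R]_n -> Prop) (E2 : 'rV[R]_n -> 'rV[R]_n -> Prop)
     (V : 'rV[R]_n -> Prop) (E : 'rV[R]_n -> 'rV[R]_n -> Prop),
     geometric_graph V1 E1 -> geometric_graph V2 E2 -> geometric_graph V E ->
     (exists u w : 'rV[R]_n, u <> w /\ (V1 u /\ V2 u) /\ (V1 w /\ V2 w)) ->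
     (forall x, V x <-> V1 x \/ V2 x) ->
     (forall a b,
        (E1 a b /\ ~ ((V1 a /\ V2 a) /\ (V1 b /\ V2 b))) \/ E2 a b -> E a b) ->
     indecomposable V1 E1 -> indecomposable V2 E2 ->
     indecomposable V E)
  /\
  (* (ii) *)
  (forall (R : realType) (n : nat)
     (V1 : 'rV[R]_n -> Prop) (E1 : 'rV[R]_n -> 'rV[R]_n -> Prop)
     (V2 : 'rV[R]_n -> Prop) (E2 : 'rV[R]_n -> 'rV[R]_n -> Prop)
     (u w : 'rV[R]_n),
     geometric_graph V1 E1 -> geometric_graph V2 E2 ->
     indecomposable V1 E1 -> indecomposable V2 E2 ->
     u <> w -> V1 u -> V2 u -> V1 w -> V2 w ->
     indecomposable (fun x => V1 x \/ V2 x)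
       (fun a b => (E1 a b /\ ~ ((a = u /\ b = w) \/ (a = w /\ b = u)))
                   \/ E2 a b)).
Proof.
split.
- move=> R n V1 E1 V2 E2 V E _ _ _ [u [w [uw [[V1u V2u] [V1w V2w]]]]]
    HV sub_E ind1 ind2 f dec_f.
  have ind : indecomposable (fun x => V1 x \/ V2 x) E.
    apply: (indecomposable_glue ind1 ind2 uw V1u V2u V1w V2w) => a b e.
      by apply: sub_E; right.
    case: (classic ((V1 a /\ V2 a) /\ (V1 b /\ V2 b))) => [[[_ V2a] [_ V2b]]|out].
      by right.
    by left; apply: sub_E; left.
  by have [alpha [z fz]] := ind f dec_f; exists alpha, z => v /HV /fz.
- move=> R n V1 E1 V2 E2 u w _ _ ind1 ind2 uw V1u V2u V1w V2w.
  apply: (indecomposable_glue ind1 ind2 uw V1u V2u V1w V2w) => a b e.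
    by right.
  case: (classic ((a = u /\ b = w) \/ (a = w /\ b = u))) => [uw_edge|other].
    by right; case: uw_edge => -[-> ->].
  by left; left.
Qed.
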